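(* Let $(H,R)$ be a quasitriangular Hopf algebra. Then at least one of the following holds: (i) $|G(H^o)|=1$; (ii) $|G(H^o)|\neq1$ and $G(H^o)\cap Z(H^o)\neq\{1\}$; (iii) $|G(H^o)|\neq1$, $G(H^o)\cap Z(H^o)=\{1\}$, and the center $Z(G(H))$ of the group $G(H)$ is nontrivial.
   Context: Quasitriangular $(H,R)$: $R$ invertible with $(\Delta\otimes\mathrm{id})(R)=R_{13}R_{23}$, $(\mathrm{id}\otimes\Delta)(R)=R_{13}R_{12}$, $\tau\Delta(h)=R\Delta(h)R^{-1}$. $H^o$ is the finite dual Hopf algebra $\{f\in H^*\mid f$ vanishes on some finite-codimensional ideal$\}$. $G(B)$ denotes the group of group-like elements of a Hopf algebra $B$, $Z(B)$ its center. *)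

From HB Require Import structures.
From mathcomp Require Import all_boot all_order all_algebra.
Set Implicit Arguments. Unset Strict Implicit. Unset Printing Implicit Defensive.
Import GRing.Theory.
Local Open Scope ring_scope.

(* Tensors in H (x) H and H (x) H (x) H are represented as finite sums of
   pure tensors (sequences of pairs / triples).  Two such representatives
   denote the same tensor iff all products of linear functionals agree on
   them (over a field, V (x) W embeds into the dual of V-dual (x) W-dual). *)

Section Hopf.
Variables (k : fieldType) (H : algType k).

Definition tensor2 := seq (H * H)%type.
Definition tensor3 := seq (H * H * H)%type.

Definition ev2 (f g : {scalar H}) (t : tensor2) : k :=
  \sum_(p <- t) f p.1 * g p.2.
Definition ev3 (f g h : {scalar H}) (t : tensor3) : k :=
  \sum_(p <- t) f p.1.1 * g p.1.2 * h p.2.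

Definition teq2 (t u : tensor2) : Prop := forall f g, ev2 f g t = ev2 f g u.
Definition teq3 (t u : tensor3) : Prop := forall f g h, ev3 f g h t = ev3 f g h u.

Definition mul2 (t u : tensor2) : tensor2 :=
  [seq (p.1 * q.1, p.2 * q.2) | p <- t, q <- u].
Definition lin2 (a : k) (t u : tensor2) : tensor2 :=
  [seq (a *: p.1, p.2) | p <- t] ++ u.
Definition flip2 (t : tensor2) : tensor2 := [seq (p.2, p.1) | p <- t].

Definition copl (cop : H -> tensor2) (t : tensor2) : tensor3 :=
  [seq (q.1, q.2, p.2) | p <- t, q <- cop p.1].
Definition copr (cop : H -> tensor2) (t : tensor2) : tensor3 :=
  [seq (p.1, q.1, q.2) | p <- t, q <- cop p.2].

Definition is_hopf (cop : H -> tensor2) (eps : {scalar H}) (S : {linear H -> H})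
  : Prop :=
  (forall (a : k) (x y : H), teq2 (cop (a *: x + y)) (lin2 a (cop x) (cop y))) /\
  (forall x y : H, teq2 (cop (x * y)) (mul2 (cop x) (cop y))) /\
  teq2 (cop 1) [:: (1, 1)] /\
  (forall h : H, teq3 (copl cop (cop h)) (copr cop (cop h))) /\
  (forall x y : H, eps (x * y) = eps x * eps y) /\
  eps 1 = 1 /\
  (forall h : H, \sum_(p <- cop h) eps p.1 *: p.2 = h /\
                 \sum_(p <- cop h) eps p.2 *: p.1 = h) /\
  (forall h : H, \sum_(p <- cop h) S p.1 * p.2 = eps h *: 1 /\
                 \sum_(p <- cop h) p.1 * S p.2 = eps h *: 1).

Definition quasitriangular (cop : H -> tensor2) (R : tensor2) : Prop :=
  [/\ exists Rinv : tensor2,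
        teq2 (mul2 R Rinv) [:: (1, 1)] /\ teq2 (mul2 Rinv R) [:: (1, 1)],
      (* (Delta (x) id)(R) = R13 R23 *)
      teq3 (copl cop R) [seq (p.1, q.1, p.2 * q.2) | p <- R, q <- R],
      (* (id (x) Delta)(R) = R13 R12 *)
      teq3 (copr cop R) [seq (p.1 * q.1, q.2, p.2) | p <- R, q <- R] &
      forall Rinv : tensor2, teq2 (mul2 Rinv R) [:: (1, 1)] ->
        forall h : H, teq2 (flip2 (cop h)) (mul2 (mul2 R (cop h)) Rinv)].

Definition is_ideal (I : pred H) : Prop :=
  [/\ I 0,
      (forall (a : k) x y, I x -> I y -> I (a *: x + y)) &
      (forall x y, I y -> I (x * y) /\ I (y * x))].

Definition finite_codim (I : pred H) : Prop :=
  exists s : seq H, forall h : H, exists c : seq k,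
    I (h - \sum_(i < size s) c`_i *: s`_i).

Definition in_finite_dual (f : {scalar H}) : Prop :=
  exists I : pred H, [/\ is_ideal I, finite_codim I & forall x, I x -> f x = 0].

Definition conv (cop : H -> tensor2) (f g : {scalar H}) (h : H) : k :=
  ev2 f g (cop h).

(* group-like elements of H^o : Delta_{H^o}(f) = f (x) f, eps_{H^o}(f) = 1,
   where Delta_{H^o} is the transpose of multiplication and eps_{H^o}(f) = f(1) *)
Definition grouplike_dual (f : {scalar H}) : Prop :=
  [/\ in_finite_dual f, (forall a b : H, f (a * b) = f a * f b) & f 1 = 1].

Definition central_dual (cop : H -> tensor2) (f : {scalar H}) : Prop :=
  in_finite_dual f /\
  forall g : {scalar H}, in_finite_dual g -> forall h, conv cop f g h = conv cop g f h.

Definition is_unit_dual (eps : {scalar H}) (f : {scalar H}) : Prop :=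
  forall h : H, f h = eps h.

Definition grouplike (cop : H -> tensor2) (eps : {scalar H}) (g : H) : Prop :=
  teq2 (cop g) [:: (g, g)] /\ eps g = 1.

End Hopf.

(* Let f be a group-like element of H^o other than eps, i.e. an algebra map
   H -> k, and put phi := (f (x) id)(R).  Applying f to the first leg of
   (id (x) Delta)(R) = R13 R12 shows Delta(phi) = phi (x) phi, so phi is a
   group-like element of H (f (x) id is multiplicative, so phi is invertible).
   Applying f (x) id to tau Delta(h) = R Delta(h) R^-1 gives, for a group-like
   g, f(g) g = f(g) phi g phi^-1 with f(g) <> 0, so phi is central in G(H);
   and if phi = 1 the same identity says f * g = g * f for every g in H^o,
   i.e. f is central in H^o.  Hence, when G(H^o) is not trivial and meets the
   centre of H^o trivially, phi is a nontrivial central element of G(H).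

   Tensors are only known through functionals, so these computations need
   linear forms on H to separate points; in infinite dimension they come from
   Zorn's lemma applied to graphs of partial linear forms. *)

From HB Require Import structures.
From mathcomp Require Import all_boot all_order all_algebra.
From mathcomp Require Import boolp classical_sets ring.
Set Implicit Arguments. Unset Strict Implicit. Unset Printing Implicit Defensive.
Import GRing.Theory.
Local Open Scope ring_scope.

Section LinearGraph.
Local Open Scope classical_set_scope.
Variables (k : fieldType) (V : lmodType k).

Definition linear_graph (G : set (V * k)%type) : Prop :=
  (forall z c c', G (z, c) -> G (z, c') -> c = c') /\
  (forall a z c z' c', G (z, c) -> G (z', c') -> G (a *: z + z', a * c + c')).

Lemma linear_graph_bigcup (L : set (V * k)%type) (F : set (set (V * k)%type)) :
  linear_graph L -> (forall X, F X -> linear_graph (X `|` L)) ->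
  total_on F subset -> linear_graph ((\bigcup_(X in F) X) `|` L).
Proof.
move=> gL gF Ftot; set U := \bigcup_(X in F) X.
have two p q : (U `|` L) p -> (U `|` L) q ->
    exists Y, [/\ linear_graph (Y `|` L), Y `<=` U, (Y `|` L) p & (Y `|` L) q].
  move: p q => p q [[X FX Xp]|Lp] [[Y FY Yq]|Lq].
  - have [XY|YX] := Ftot _ _ FX FY.
    + by exists Y; split; [exact: gF|exact: bigcup_sup|left; exact: XY|left].
    + by exists X; split; [exact: gF|exact: bigcup_sup|left|left; exact: YX].
  - by exists X; split; [exact: gF|exact: bigcup_sup|left|right].
  - by exists Y; split; [exact: gF|exact: bigcup_sup|right|left].
  - by exists set0; split; [rewrite set0U|by []|right|right].
split=> [z c c' p q|a z c z' c' p q].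
  by have [Y [[funY _] _ p' q']] := two _ _ p q; exact: funY p' q'.
have [Y [[_ linY] YU p' q']] := two _ _ p q.
by case: (linY a _ _ _ _ p' q') => [/YU|]; [left|right].
Qed.

Section Extension.
Variables (G : set (V * k)%type) (y : V).
Hypotheses (gG : linear_graph G) (G00 : G (0, 0)) (y_free : forall c, ~ G (y, c)).

Definition graph_extension : set (V * k)%type :=
  [set p | exists v d a, G (v, d) /\ p = (v + a *: y, d)].

Lemma sub_graph_extension : G `<=` graph_extension.
Proof. by move=> [v d] Gvd; exists v, d, 0; rewrite scale0r addr0. Qed.

Lemma linear_graph_extension : linear_graph graph_extension.
Proof.
have [funG linG] := gG.
split=> [z c c'|s z c z' c'].
  move=> [v [d [a [Gv [-> ->]]]]] [v' [d' [a' [Gv' [e ->]]]]].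
  have [eq_a|neq_a] := eqVneq a a'.
    by move: e; rewrite eq_a => /addIr ev; rewrite ev in Gv; exact: funG Gv Gv'.
  (* otherwise y = (a - a')^-1 *: (v' - v) would already have a value *)
  exfalso; apply: (@y_free ((a - a')^-1 * (d' - d))).
  have Gdiff : G (v' - v, d' - d).
    by have := linG (-1) _ _ _ _ Gv Gv'; rewrite scaleN1r mulN1r addrC [_ + d']addrC.
  have ey : (a - a')^-1 *: (v' - v) = y.
    have <- : (a - a') *: y = v' - v.
      by rewrite scalerBl; apply/eqP; rewrite subr_eq addrAC -e addrC addKr.
    by rewrite scalerA mulVf ?scale1r // subr_eq0.
  by have := linG ((a - a')^-1) _ _ _ _ Gdiff G00; rewrite !addr0 ey.
move=> [v [d [a [Gv [-> ->]]]]] [v' [d' [a' [Gv' [-> ->]]]]].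
exists (s *: v + v'), (s * d + d'), (s * a + a'); split; first exact: linG.
by rewrite scalerDr scalerDl scalerA addrACA.
Qed.

End Extension.

Lemma total_linear_graph (x : V) : x != 0 ->
  exists G, [/\ linear_graph G, G (x, 1) & forall y, exists c, G (y, c)].
Proof.
move=> x_neq0; pose line : set (V * k)%type := [set p | exists a, p = (a *: x, a)].
have gline : linear_graph line.
  split=> [z c c' [a [-> ->]] [b [e ->]]|a z c z' c' [e [-> ->]] [f [-> ->]]].
    have : (a - b) *: x = 0 by rewrite scalerBl e subrr.
    by move/eqP; rewrite scaler_eq0 (negbTE x_neq0) orbF subr_eq0 => /eqP.
  by exists (a * e + f); rewrite scalerDl scalerA.
have [A [gA Amax]] : exists A, linear_graph (A `|` line) /\
    forall B, A `<` B -> ~ linear_graph (B `|` line).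
  by apply: Zorn_bigcup => F FP Ftot; exact: linear_graph_bigcup.
set G := A `|` line; have lineG : line `<=` G by move=> p; right.
exists G; split => //; first by apply: lineG; exists 1; rewrite scale1r.
move=> y; apply: contrapT => y_free.
have {}y_free c : ~ G (y, c) by move=> Gyc; apply: y_free; exists c.
have G00 : G (0, 0) by apply: lineG; exists 0; rewrite scale0r.
have GB := @sub_graph_extension G y.
apply: (Amax (graph_extension G y)).
  split; first by move=> p Ap; apply: GB; left.
  have By0 : graph_extension G y (y, 0) by exists 0, 0, 1; rewrite add0r scale1r.
  by move=> BA; apply: (@y_free 0); left; apply: BA.
rewrite setUidl; last by move=> p /lineG /GB.
exact: linear_graph_extension.
Qed.

Lemma scalar_of_linear_graph (G : set (V * k)%type) :
  linear_graph G -> (forall y, exists c, G (y, c)) ->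
  exists v : {scalar V}, forall z c, G (z, c) -> v z = c.
Proof.
move=> [funG linG] totG; pose b z := projT1 (cid (totG z)).
have bP z : G (z, b z) := projT2 (cid (totG z)).
have b_lin a y z : b (a *: y + z) = a * b y + b z.
  exact: funG (bP _) (linG a _ _ _ _ (bP y) (bP z)).
exists (HB.pack b (GRing.isLinear.Build k V k^o *%R b b_lin) : {scalar V}).
by move=> z c Gzc; exact: funG (bP z) Gzc.
Qed.

Lemma scalar_eq1 (x : V) : x != 0 -> exists v : {scalar V}, v x = 1.
Proof.
move=> /total_linear_graph [G [gG Gx1 totG]].
by have [v vG] := scalar_of_linear_graph gG totG; exists v; exact: vG.
Qed.

Lemma scalar_ext (x y : V) : (forall v : {scalar V}, v x = v y) -> x = y.
Proof.
move=> exy; apply/eqP; rewrite -subr_eq0; apply/negPn/negP => /scalar_eq1 [v].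
by rewrite linearB /= exy subrr => /eqP; rewrite eq_sym oner_eq0.
Qed.

End LinearGraph.

Section Tensor.
Variables (k : fieldType) (H : algType k).
Implicit Types (f u v : {scalar H}) (t w : tensor2 H).

Definition lcontract f t : H := \sum_(p <- t) f p.1 *: p.2.

Lemma ev2_lcontract f v t : ev2 f v t = v (lcontract f t).
Proof. by rewrite /lcontract linear_sum; apply: eq_bigr => p _; rewrite linearZ. Qed.

Lemma lcontract_teq2 f t w : teq2 t w -> lcontract f t = lcontract f w.
Proof. by move=> etw; apply: scalar_ext => v; rewrite -!ev2_lcontract etw. Qed.

Lemma lcontract_seq1 f (a b : H) : lcontract f [:: (a, b)] = f a *: b.
Proof. exact: big_seq1. Qed.

Lemma ev2_flip2 u v t : ev2 u v (flip2 t) = ev2 v u t.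
Proof. by rewrite /ev2 big_map; apply: eq_bigr => p _; rewrite mulrC. Qed.

Lemma teq2_flip2 t w : teq2 t w -> teq2 (flip2 t) (flip2 w).
Proof. by move=> etw u v; rewrite !ev2_flip2 etw. Qed.

Lemma ev2_lin2 u v a t w : ev2 u v (lin2 a t w) = a * ev2 u v t + ev2 u v w.
Proof.
rewrite /ev2 /lin2 big_cat big_map mulr_sumr; congr (_ + _).
by apply: eq_bigr => p _ /=; rewrite linearZ mulrA.
Qed.

Lemma lcontract_mul2 f : (forall a b, f (a * b) = f a * f b) ->
  forall t w, lcontract f (mul2 t w) = lcontract f t * lcontract f w.
Proof.
move=> fM t w; rewrite /lcontract /mul2 big_allpairs_dep /= mulr_suml.
apply: eq_bigr => p _; rewrite mulr_sumr; apply: eq_bigr => q _ /=.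
by rewrite fM -scalerAl -scalerAr scalerA.
Qed.

Lemma ev2_cop_sum (cop : H -> tensor2 H) :
  (forall a x y, teq2 (cop (a *: x + y)) (lin2 a (cop x) (cop y))) ->
  forall I (r : seq I) (F : I -> k) (G : I -> H) u v,
  ev2 u v (cop (\sum_(i <- r) F i *: G i)) = \sum_(i <- r) F i * ev2 u v (cop (G i)).
Proof.
move=> copL I r F G u v.
have cop0 : ev2 u v (cop 0) = 0.
  have := copL 1 0 0 u v; rewrite scaler0 addr0 ev2_lin2 mul1r => e.
  by apply: (addIr (ev2 u v (cop 0))); rewrite add0r -e.
elim: r => [|i r IHr]; first by rewrite !big_nil.
by rewrite !big_cons copL ev2_lin2 IHr.
Qed.

End Tensor.

Section Quasitriangular.
Variables (k : fieldType) (H : algType k).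
Variables (cop : H -> tensor2 H) (eps : {scalar H}) (S : {linear H -> H}).
Variable R : tensor2 H.
Hypotheses (hopfH : is_hopf cop eps S) (qtR : quasitriangular cop R).

Lemma eps_grouplike_unit (x y : H) :
  teq2 (cop x) [:: (x, x)] -> y * x = 1 -> eps x = 1.
Proof.
have [_ [_ [_ [_ [_ [eps1 [counit _]]]]]]] := hopfH.
move=> cop_x yx1; have x_eps : x = eps x *: x.
  apply: scalar_ext => v; rewrite linearZ /= -[in LHS](proj1 (counit x)).
  by rewrite -ev2_lcontract cop_x /ev2 big_seq1.
by have := congr1 eps yx1; rewrite {1}x_eps -scalerAr linearZ /= yx1 eps1 mulr1.
Qed.

Lemma multiplicative_grouplike_neq0 (f : {scalar H}) (g : H) :
  (forall a b, f (a * b) = f a * f b) -> f 1 = 1 ->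
  grouplike cop eps g -> f g != 0.
Proof.
have [_ [_ [_ [_ [_ [_ [_ antipode]]]]]]] := hopfH.
move=> fM f1 [cop_g eps_g]; apply/eqP => fg0.
(* f (S g) * f g = f (S g * g) = f (eps g *: 1) = 1 *)
have := congr1 f (proj1 (antipode g)); rewrite linearZ /= f1 eps_g mulr1.
rewrite linear_sum /= (eq_bigr (fun p => (f \o S) p.1 * f p.2)); last first.
  by move=> p _; rewrite fM.
by rewrite -[LHS]/(ev2 _ _ _) cop_g /ev2 big_seq1 /= fg0 mulr0 => /esym/eqP;
  rewrite oner_eq0.
Qed.

Variable f : {scalar H}.
Hypotheses (fM : forall a b, f (a * b) = f a * f b) (f1 : f 1 = 1).

Let phi := lcontract f R.

Lemma flip_cop_conj : exists2 psi, psi * phi = 1 &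
  forall h, lcontract f (flip2 (cop h)) = phi * lcontract f (cop h) * psi.
Proof.
have [[Ri [_ RiR]] _ _ conj] := qtR; exists (lcontract f Ri).
  by rewrite -lcontract_mul2 // (lcontract_teq2 _ RiR) lcontract_seq1 f1 scale1r.
by move=> h; rewrite (lcontract_teq2 _ (conj Ri RiR h)) !lcontract_mul2.
Qed.

Lemma ev2_cop_phi (u v : {scalar H}) : ev2 u v (cop phi) = u phi * v phi.
Proof.
have [copL _] := hopfH; have [_ _ copR _] := qtR.
(* both sides are [ev3 f u v] of the two sides of (id (x) Delta)(R) = R13 R12 *)
have -> : ev2 u v (cop phi) = ev3 f u v (copr cop R).
  rewrite /phi /lcontract ev2_cop_sum // /ev3 /copr big_allpairs_dep.
  apply: eq_bigr => p _; rewrite /ev2 mulr_sumr.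
  by apply: eq_bigr => q _ /=; rewrite mulrA.
rewrite copR /ev3 big_allpairs_dep /phi -!ev2_lcontract /ev2 mulrC mulr_suml.
apply: eq_bigr => p _; rewrite mulr_sumr; apply: eq_bigr => q _ /=.
by rewrite fM; ring.
Qed.

Lemma grouplike_phi : grouplike cop eps phi.
Proof.
have cop_phi : teq2 (cop phi) [:: (phi, phi)].
  by move=> u v; rewrite ev2_cop_phi /ev2 big_seq1.
split=> //; have [psi psi_phi _] := flip_cop_conj.
exact: eps_grouplike_unit psi_phi.
Qed.

Lemma central_dual_phi1 : in_finite_dual f -> phi = 1 -> central_dual cop f.
Proof.
move=> fin_f phi1; split=> // g _ h; have [psi psi_phi conj] := flip_cop_conj.
have psi1 : psi = 1 by rewrite -[psi]mulr1 -phi1 psi_phi.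
by rewrite /conv -(ev2_flip2 f g) !ev2_lcontract conj phi1 psi1 mul1r mulr1.
Qed.

Lemma phi_comm_grouplike (g : H) : grouplike cop eps g -> phi * g = g * phi.
Proof.
move=> gg; have [cop_g _] := gg; have [psi psi_phi conj] := flip_cop_conj.
have := conj g; rewrite (lcontract_teq2 _ (teq2_flip2 cop_g)) (lcontract_teq2 _ cop_g).
rewrite /flip2 /= !lcontract_seq1 -scalerAr -scalerAl.
move=> /(scalerI (multiplicative_grouplike_neq0 fM f1 gg)) g_conj.
by rewrite {2}g_conj -mulrA psi_phi mulr1.
Qed.

End Quasitriangular.

Theorem mainTheorem12 (k : fieldType) (H : algType k)
  (cop : H -> tensor2 H) (eps : {scalar H}) (S : {linear H -> H})
  (R : tensor2 H) :
  is_hopf cop eps S -> quasitriangular cop R ->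
  let trivG := forall f, grouplike_dual f -> is_unit_dual eps f in
  (* (i) |G(H^o)| = 1 *)
  trivG \/
  (* (ii) |G(H^o)| <> 1 and G(H^o) /\ Z(H^o) <> {1} *)
  (~ trivG /\
   exists f, [/\ grouplike_dual f, central_dual cop f & ~ is_unit_dual eps f]) \/
  (* (iii) |G(H^o)| <> 1, G(H^o) /\ Z(H^o) = {1}, Z(G(H)) <> {1} *)
  [/\ ~ trivG,
      (forall f, grouplike_dual f -> central_dual cop f -> is_unit_dual eps f) &
      exists g : H, [/\ grouplike cop eps g, g <> 1 &
         forall g', grouplike cop eps g' -> g * g' = g' * g]].
Proof.
move=> hopfH qtR trivG.
have [|ntrivG] := pselect trivG; first by left.
right; have [|no_central] := pselect (exists f, [/\ grouplike_dual f,
    central_dual cop f & ~ is_unit_dual eps f]); first by left.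
right; split=> //.
  by move=> f gf cf; apply: contrapT => nuf; apply: no_central; exists f.
have [f [[fin_f fM f1] nuf]] : exists f, grouplike_dual f /\ ~ is_unit_dual eps f.
  have [f /not_implyP [gf nuf]] : exists f, ~ (grouplike_dual f -> is_unit_dual eps f).
    exact/existsNP.
  by exists f.
exists (lcontract f R); split.
- exact: (grouplike_phi hopfH qtR (f := f) fM f1).
- move=> phi1; apply: no_central; exists f; split=> //.
  exact: (central_dual_phi1 qtR (f := f)).
- exact: (phi_comm_grouplike hopfH qtR (f := f)).
Qed.
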